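(* Let $n\ge1$, $p\in(0,1]$ and $q\in[n]$. Then $\gamma_n^*\ge\big(1-(1-p)^q\big)\gamma_{n,q}^*$.
   Context: For $q\in[n]$, $\gamma_{n,q}^*$ is the optimal value of $(LP)_{n,p,q}$: maximize $\gamma$ over $\mathbf x=(x_{t,s})_{t\in[n],s\in[t]}\ge0$ and $\gamma$ subject to $x_{t,s}\le\frac1t\big(1-p\sum_{\tau=1}^{t-1}\sum_{\sigma=1}^\tau x_{\tau,\sigma}\big)$ for all $t\in[n],s\in[t]$, and $\gamma\le\frac{p}{1-(1-p)^k}\sum_{t=1}^n\sum_{s=1}^tx_{t,s}P_{t,s,k}$ for all $k\in[q]$, where $P_{t,s,k}=\sum_{i=s}^{\min(k,n-t+s)}\binom{i-1}{s-1}\binom{n-i}{t-s}/\binom nt$ (the probability that the $t$-th of $n$ uniformly randomly ordered ranked candidates has overall rank $\le k$ given that its rank among the first $t$ is $s$). $\gamma_n^*=\gamma_{n,n}^*$ is the optimal value of the same program with $k$ ranging over all of $[n]$. *)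

From HB Require Import structures.
From mathcomp Require Import all_boot all_order all_algebra.
From mathcomp Require Import all_classical all_reals.
Set Implicit Arguments. Unset Strict Implicit. Unset Printing Implicit Defensive.
Import Order.TTheory GRing.Theory Num.Theory.
Local Open Scope classical_set_scope.
Local Open Scope ring_scope.

Definition Ptsk {R : realType} (n t s k : nat) : R :=
  (\sum_(s <= i < (minn k (n - t + s)).+1)
      ('C(i.-1, s.-1) * 'C(n - i, t - s))%:R) / ('C(n, t))%:R.

Definition tri_sum {R : realType} (m : nat) (f : nat -> nat -> R) : R :=
  \sum_(1 <= t < m.+1) \sum_(1 <= s < t.+1) f t s.

(* Feasibility of (x, gamma) for (LP)_{n,p,q}; x is indexed by t in [n], s in [t]
   (values of x outside that range play no role). *)
Definition LP_feasible {R : realType} (n : nat) (p : R) (q : nat)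
    (x : nat -> nat -> R) (gamma : R) : Prop :=
  (forall t s, (1 <= s)%N -> (s <= t)%N -> (t <= n)%N -> 0 <= x t s) /\
  (forall t s, (1 <= s)%N -> (s <= t)%N -> (t <= n)%N ->
     x t s <= (t%:R)^-1 * (1 - p * tri_sum t.-1 x)) /\
  (forall k, (1 <= k)%N -> (k <= q)%N ->
     gamma <= p / (1 - (1 - p) ^+ k) * tri_sum n (fun t s => x t s * Ptsk n t s k)).

Definition gamma_star {R : realType} (n : nat) (p : R) (q : nat) : R :=
  sup [set g : R | exists x, LP_feasible n p q x g].

From HB Require Import structures.
From mathcomp Require Import all_boot all_order all_algebra.
From mathcomp Require Import all_classical all_reals.
Set Implicit Arguments. Unset Strict Implicit. Unset Printing Implicit Defensive.
Import Order.TTheory GRing.Theory Num.Theory.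
Local Open Scope ring_scope.

(* If (x, g) is feasible for (LP)_{n,p,q}, then (x, (1 - (1-p)^q) g) is feasible
   for (LP)_{n,p,n}.  Write S_k for the sum of x_{t,s} P_{t,s,k}; it is
   nondecreasing in k since P_{t,s,k} is.  The constraints k <= q only get
   weaker, as 1 - (1-p)^q <= 1.  For k > q the k-th right-hand side is at least
   p S_k >= p S_q = (1 - (1-p)^q) (p / (1 - (1-p)^q)) S_q >= (1 - (1-p)^q) g.
   Passing to suprema needs the feasible values of (LP)_{n,p,n} to be bounded,
   which holds because every x_{t,s} <= 1. *)

Section Geometric.
Variable R : numDomainType.

Lemma subr1_expr_gt0 (p : R) k : 0 < p -> p <= 1 -> (0 < k)%N -> 0 < 1 - (1 - p) ^+ k.
Proof.
move=> p0 p1 k0; rewrite subr_gt0 expr_lt1 // ?subr_ge0 //.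
by rewrite ltrBlDr ltrDl.
Qed.

Lemma subr1_expr_le1 (p : R) k : p <= 1 -> 1 - (1 - p) ^+ k <= 1.
Proof. by move=> p1; rewrite lerBlDr lerDl exprn_ge0 // subr_ge0. Qed.

End Geometric.

Section Feasibility.
Variable R : realType.
Implicit Types (p g : R) (x f h : nat -> nat -> R).

Lemma ler_tri_sum m f h :
  (forall t s, (1 <= s)%N -> (s <= t)%N -> (t <= m)%N -> f t s <= h t s) ->
  tri_sum m f <= tri_sum m h.
Proof.
move=> fh; apply: ler_sum_nat => t /andP[_ tm].
by apply: ler_sum_nat => s /andP[s1 st]; exact: fh.
Qed.

Lemma tri_sum0 m : tri_sum m (fun _ _ => 0) = 0 :> R.
Proof. by rewrite /tri_sum big1 // => t _; rewrite big1. Qed.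

Lemma tri_sum_ge0 m f :
  (forall t s, (1 <= s)%N -> (s <= t)%N -> (t <= m)%N -> 0 <= f t s) ->
  0 <= tri_sum m f.
Proof. by move=> f0; rewrite -(tri_sum0 m); exact: ler_tri_sum. Qed.

Lemma Ptsk_ge0 n t s k : 0 <= Ptsk n t s k :> R.
Proof. by rewrite divr_ge0 // sumr_ge0. Qed.

Lemma Ptsk_homo n t s : {homo Ptsk n t s : k k' / (k <= k')%N >-> k <= k' :> R}.
Proof.
move=> k k' kk'; rewrite ler_wpM2r ?invr_ge0 //.
set a := minn k _; set b := minn k' _.
have ab : (a <= b)%N by rewrite leq_min geq_minr (leq_trans (geq_minl _ _)).
have [sa|as_] := leqP s a.+1; last by rewrite big_geq ?sumr_ge0 // ltnW.
by rewrite [leRHS](@big_cat_nat _ _ _ a.+1) //= lerDl sumr_ge0.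
Qed.

Definition LP_sum n x k : R := tri_sum n (fun t s => x t s * Ptsk n t s k).

Definition LP_rhs n p x k : R := p / (1 - (1 - p) ^+ k) * LP_sum n x k.

Variables (n : nat) (p : R).
Hypotheses (p_gt0 : 0 < p) (p_le1 : p <= 1).

Section Nonnegative.
Variable x : nat -> nat -> R.
Hypothesis x_ge0 : forall t s, (1 <= s)%N -> (s <= t)%N -> (t <= n)%N -> 0 <= x t s.

Lemma LP_sum_ge0 k : 0 <= LP_sum n x k.
Proof. by apply: tri_sum_ge0 => t s *; rewrite mulr_ge0 ?x_ge0 ?Ptsk_ge0. Qed.

Lemma LP_sum_homo : {homo LP_sum n x : k k' / (k <= k')%N >-> k <= k'}.
Proof. by move=> k k' kk'; apply: ler_tri_sum => t s *; rewrite ler_wpM2l ?x_ge0 ?Ptsk_homo. Qed.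

Lemma LP_rhs_ge0 k : (0 < k)%N -> 0 <= LP_rhs n p x k.
Proof.
move=> k0; rewrite mulr_ge0 ?LP_sum_ge0 // divr_ge0 ?ltW //.
exact: subr1_expr_gt0.
Qed.

Lemma LP_sum_le_rhs k : (0 < k)%N -> p * LP_sum n x k <= LP_rhs n p x k.
Proof.
move=> k0; rewrite ler_wpM2r ?LP_sum_ge0 // ler_pdivlMr ?subr1_expr_gt0 //.
by apply: ler_piMr; [exact: ltW | exact: subr1_expr_le1].
Qed.

End Nonnegative.

Lemma subr1_expr_mul_LP_rhs x k : (0 < k)%N ->
  (1 - (1 - p) ^+ k) * LP_rhs n p x k = p * LP_sum n x k.
Proof.
move=> k0; rewrite mulrA mulrCA divff ?mulr1 //.
by rewrite lt0r_neq0 ?subr1_expr_gt0.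
Qed.

Lemma LP_feasible_x_le1 q x g : LP_feasible n p q x g ->
  forall t s, (1 <= s)%N -> (s <= t)%N -> (t <= n)%N -> x t s <= 1.
Proof.
move=> [x_ge0 [x_le _]] t s s1 st tn.
have t_ge1 : 1 <= t%:R :> R by rewrite ler1n (leq_trans s1 st).
apply: le_trans (x_le t s s1 st tn) _.
rewrite -[leRHS](mulVf (lt0r_neq0 (lt_le_trans ltr01 t_ge1))) ler_wpM2l ?invr_ge0 //.
apply: le_trans t_ge1; rewrite gerBl mulr_ge0 ?(ltW p_gt0) //.
apply: tri_sum_ge0 => a b b1 ba at_.
by rewrite x_ge0 // (leq_trans at_) // (leq_trans (leq_pred t)).
Qed.

Lemma LP_feasible0 q : LP_feasible n p q (fun _ _ => 0) 0.
Proof.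
split=> //; split=> [t s *|k *]; first by rewrite tri_sum0 mulr0 subr0 mulr1 invr_ge0.
by rewrite /tri_sum big1 ?mulr0 // => t _; rewrite big1 // => s _; rewrite mul0r.
Qed.

Lemma LP_feasible_ubound x g : (1 <= n)%N -> LP_feasible n p n x g ->
  g <= tri_sum n (fun t s => Ptsk n t s 1).
Proof.
move=> n1 feas; have x_le1 := LP_feasible_x_le1 feas.
case: feas => [_ [_ rhs]]; apply: le_trans (rhs 1%N (leqnn 1) n1) _.
rewrite expr1 opprB addrC subrK divff ?mul1r ?lt0r_neq0 //.
by apply: ler_tri_sum => t s *; rewrite ler_piMl ?Ptsk_ge0 ?x_le1.
Qed.

Lemma LP_feasible_extend q x g : (1 <= q)%N ->
  LP_feasible n p q x g -> LP_feasible n p n x ((1 - (1 - p) ^+ q) * g).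
Proof.
move=> q1 [x_ge0 [x_le rhs]]; split=> //; split=> // k k1 _.
change ((1 - (1 - p) ^+ q) * g <= LP_rhs n p x k).
have cq_gt0 := subr1_expr_gt0 p_gt0 p_le1 q1.
have [kq|qk] := leqP k q.
  have [g0|g0] := lerP 0 g; last first.
    by rewrite (le_trans _ (LP_rhs_ge0 x_ge0 k1)) // pmulr_rle0 // ltW.
  by rewrite (le_trans _ (rhs k k1 kq)) // ler_piMl // subr1_expr_le1.
apply: le_trans (LP_sum_le_rhs x_ge0 k1).
apply: le_trans (ler_wpM2l (ltW p_gt0) (LP_sum_homo x_ge0 (ltnW qk))).
by rewrite -subr1_expr_mul_LP_rhs // ler_wpM2l ?(ltW cq_gt0) ?rhs.
Qed.

End Feasibility.

Theorem mainTheorem13 (R : realType) (n : nat) (p : R) (q : nat) :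
  (1 <= n)%N -> 0 < p -> p <= 1 -> (1 <= q)%N -> (q <= n)%N ->
  (1 - (1 - p) ^+ q) * gamma_star n p q <= gamma_star n p n.
Proof.
move=> n1 p0 p1 q1 _; have cq_gt0 := subr1_expr_gt0 p0 p1 q1.
have has_sup_n : has_sup [set g : R | exists x, LP_feasible n p n x g].
  split; first by exists 0, (fun _ _ => 0); exact: LP_feasible0.
  by exists (tri_sum n (fun t s => Ptsk n t s 1)) => g [x /LP_feasible_ubound]; apply.
rewrite mulrC -ler_pdivlMr //; apply: ge_sup.
  by exists 0, (fun _ _ => 0); exact: LP_feasible0.
move=> g [x feas]; rewrite ler_pdivlMr // mulrC.
by apply: sup_upper_bound => //; exists x; exact: LP_feasible_extend.
Qed.
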